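(* Let $\mathcal H$ be an HDML model, $\varphi$ a formula, and $Q_n^f$ the filtration classes defined below. For $n\ge1$, $1\le i\le n$ and $[q]\in Q_n^f$, define $s_i^f([q])=[r]$ iff $s_i(p)\in[r]$ for all $p\in[q]$, and $t_i^f([q])=[r]$ iff $t_i(p)\in[r]$ for all $p\in[q]$. Then (1) $s_i^f$ and $t_i^f$ are well-defined total maps $Q_n^f\to Q_{n-1}^f$; and (2) they satisfy the cubical laws $\alpha^f_i\circ\beta^f_j=\beta^f_{j-1}\circ\alpha^f_i$ for $1\le i<j\le n$, $\alpha,\beta\in\{s,t\}$. Consequently $(\bigcup_n Q_n^f,\bar s^f,\bar t^f)$ is a cubical set.
   Context: A cubical set consists of pairwise disjoint sets $Q_n$ ($n\in\mathbb N$), $Q=\bigcup_n Q_n$, and for every $n\ge1$ and $1\le i\le n$ maps $s_i,t_i:Q_n\to Q_{n-1}$ satisfying the cubical laws $\alpha_i\circ\beta_j=\beta_{j-1}\circ\alpha_i$ for all $1\le i<j\le n$ and $\alpha,\beta\in\{s,t\}$. Elements of $Q_n$ are cells of dimension $n$. An HDML model is $\mathcal H=(Q,\bar s,\bar t,l,V)$ where $(Q,\bar s,\bar t)$ is a cubical set, $l:Q_1\to\Sigma$ is a labeling with $l(s_i(q))=l(t_i(q))$ for $q\in Q_2$, $i\in\{1,2\}$, and $V:Q\to 2^{AP}$ a valuation. HDML formulas: $\varphi::=p\mid\bot\mid\varphi\to\varphi\mid\langle\mathsf s\rangle\varphi\mid\langle\mathsf t\rangle\varphi$ ($p\in AP$).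 Satisfaction at $q\in Q_n$: $\mathcal H,q\models p$ iff $p\in V(q)$; $\bot$ never holds; $\to$ classical; $\mathcal H,q\models\langle\mathsf s\rangle\psi$ iff there are $q'\in Q_{n+1}$ and $1\le i\le n+1$ with $s_i(q')=q$ and $\mathcal H,q'\models\psi$; $\mathcal H,q\models\langle\mathsf t\rangle\psi$ iff there is $1\le i\le n$ with $\mathcal H,t_i(q)\models\psi$. $\mathcal C(\varphi)$ is the set of subformulas of $\varphi$. For $q,q'$ of the same dimension, $q\equiv q'$ iff for every $\psi\in\mathcal C(\varphi)$, $\mathcal H,q\models\psi\iff\mathcal H,q'\models\psi$. For $q\in Q_0$, $[q]=\{q'\in Q_0:q\equiv q'\}$; for $q\in Q_n$, $n\ge1$, $[q]=\{q'\in Q_n: q\equiv q'$, $t_i(q')\in[t_i(q)]$ and $s_i(q')\in[s_i(q)]$ for all $1\le i\le n\}$; $Q_n^f=\{[q]:q\in Q_n\}$. *)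

From Stdlib Require Import Arith Lia.

Set Implicit Arguments.

(* Cubical laws for a dimension-indexed family Q with face maps
   s n i, t n i : Q (S n) -> Q n, meaningful for 1 <= i <= S n.
   face true = s, face false = t  (alpha, beta range over {s,t}). *)
Definition cubical_laws (Q : nat -> Type)
  (s t : forall n : nat, nat -> Q (S n) -> Q n) : Prop :=
  forall (a b : bool) (n i j : nat) (q : Q (S (S n))),
    1 <= i -> i < j -> j <= S (S n) ->
    (if a then s else t) n i ((if b then s else t) (S n) j q) =
    (if b then s else t) n (j - 1) ((if a then s else t) (S n) i q).

Record CubicalSet := {
  cQ : nat -> Type;
  cs : forall n : nat, nat -> cQ (S n) -> cQ n;
  ct : forall n : nat, nat -> cQ (S n) -> cQ n;
  claws : cubical_laws cQ cs ct
}.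

Record HDML (Sigma AP : Type) := {
  hcube :> CubicalSet;
  hl : cQ hcube 1 -> Sigma;
  hl_law : forall (q : cQ hcube 2) (i : nat), 1 <= i <= 2 ->
      hl (cs hcube 1 i q) = hl (ct hcube 1 i q);
  hV : forall n : nat, cQ hcube n -> AP -> Prop
}.

Inductive form (AP : Type) : Type :=
| FVar : AP -> form AP
| FBot : form AP
| FImp : form AP -> form AP -> form AP
| FDs : form AP -> form AP
| FDt : form AP -> form AP.

Arguments FBot {AP}.

Section Sem.
Variables (Sigma AP : Type) (H : HDML Sigma AP).

Fixpoint sat (phi : form AP) : forall n : nat, cQ H n -> Prop :=
  match phi with
  | FVar p => fun n q => hV H n q p
  | FBot => fun _ _ => False
  | FImp a b => fun n q => sat a n q -> sat b n q
  | FDs a => fun n q => exists (q' : cQ H (S n)) (i : nat),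
       1 <= i <= S n /\ cs H n i q' = q /\ sat a (S n) q'
  | FDt a => fun n => match n return cQ H n -> Prop with
       | 0 => fun _ => False
       | S m => fun q => exists i, 1 <= i <= S m /\ sat a m (ct H m i q)
       end
  end.

Fixpoint subformula (psi phi : form AP) : Prop :=
  psi = phi \/
  match phi with
  | FImp a b => subformula psi a \/ subformula psi b
  | FDs a => subformula psi a
  | FDt a => subformula psi a
  | _ => False
  end.

Definition fequiv (phi : form AP) (n : nat) (q q' : cQ H n) : Prop :=
  forall psi, subformula psi phi -> (sat psi n q <-> sat psi n q').

(* cls phi n q q'  :<->  q' \in [q] *)
Fixpoint cls (phi : form AP) (n : nat) : cQ H n -> cQ H n -> Prop :=
  match n return cQ H n -> cQ H n -> Prop with
  | 0 => fun q q' => fequiv phi 0 q q'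
  | S m => fun q q' => fequiv phi (S m) q q' /\
      forall i, 1 <= i <= S m ->
        cls phi m (ct H m i q) (ct H m i q') /\
        cls phi m (cs H m i q) (cs H m i q')
  end.

Definition isClass (phi : form AP) (n : nat) (C : cQ H n -> Prop) : Prop :=
  exists q, forall x, C x <-> cls phi n q x.

(* alpha^f_i(C) = D  (alpha = s if a = true, t otherwise):
   D \in Q_{n}^f and alpha_i(p) \in D for all p \in C. *)
Definition faceF (phi : form AP) (a : bool) (n i : nat)
  (C : cQ H (S n) -> Prop) (D : cQ H n -> Prop) : Prop :=
  isClass phi n D /\
  forall p, C p -> D ((if a then cs H else ct H) n i p).

Definition QF (phi : form AP) (n : nat) : Type :=
  { C : cQ H n -> Prop | isClass phi n C }.

End Sem.

From Stdlib Require Import Arith Lia.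
From Stdlib Require Import ClassicalEpsilon FunctionalExtensionality PropExtensionality ProofIrrelevance.

(* Proof idea: the relation "q' in [q]" is an equivalence relation that is
   preserved by every face map, since [q] records the classes of all faces of q.
   Hence the face of any member of a class lies in one and the same class, which
   makes alpha^f_i well defined, and the cubical laws of the filtration are
   inherited from those of H by evaluating both sides at a representative. *)

Section Filtration.
Variables (Sigma AP : Type) (H : HDML Sigma AP) (phi : form AP).

Definition face (a : bool) : forall n : nat, nat -> cQ H (S n) -> cQ H n :=
  if a then cs H else ct H.

Lemma face_cubical (a b : bool) {n i j : nat} {q : cQ H (S (S n))} :
  1 <= i -> i < j -> j <= S (S n) ->
  face a n i (face b (S n) j q) = face b n (j - 1) (face a (S n) i q).
Proof. exact (claws H a b q). Qed.

Lemma cls_refl n (q : cQ H n) : cls H phi n q q.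
Proof.
  induction n as [|n IHn]; simpl.
  - intros psi _; reflexivity.
  - split; [intros psi _; reflexivity | split; apply IHn].
Qed.

Lemma cls_sym {n} {q p : cQ H n} : cls H phi n q p -> cls H phi n p q.
Proof.
  revert q p; induction n as [|n IHn]; intros q p Hqp; simpl in *.
  - intros psi Hpsi; symmetry; exact (Hqp psi Hpsi).
  - destruct Hqp as [Heq Hfaces]; split.
    + intros psi Hpsi; symmetry; exact (Heq psi Hpsi).
    + intros i Hi; destruct (Hfaces i Hi); split; apply IHn; assumption.
Qed.

Lemma cls_trans {n} {q p r : cQ H n} :
  cls H phi n q p -> cls H phi n p r -> cls H phi n q r.
Proof.
  revert q p r; induction n as [|n IHn]; intros q p r Hqp Hpr; simpl in *.
  - intros psi Hpsi; rewrite (Hqp psi Hpsi); exact (Hpr psi Hpsi).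
  - destruct Hqp as [Heq1 Hfaces1], Hpr as [Heq2 Hfaces2]; split.
    + intros psi Hpsi; rewrite (Heq1 psi Hpsi); exact (Heq2 psi Hpsi).
    + intros i Hi; destruct (Hfaces1 i Hi), (Hfaces2 i Hi).
      split; eapply IHn; eassumption.
Qed.

Lemma cls_face (a : bool) n i (q p : cQ H (S n)) :
  1 <= i <= S n -> cls H phi (S n) q p ->
  cls H phi n (face a n i q) (face a n i p).
Proof. intros Hi [_ Hfaces]; destruct (Hfaces i Hi), a; assumption. Qed.

Lemma isClass_cls {n} (q : cQ H n) : isClass H phi n (cls H phi n q).
Proof. exists q; reflexivity. Qed.

Lemma isClass_ext {n} {D D' : cQ H n -> Prop} {y : cQ H n} :
  isClass H phi n D -> isClass H phi n D' -> D y -> D' y ->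
  forall x, D x <-> D' x.
Proof.
  intros [d Hd] [d' Hd'] Hy Hy' x; rewrite Hd, Hd'.
  apply Hd in Hy; apply Hd' in Hy'.
  split; intro Hx.
  - exact (cls_trans Hy' (cls_trans (cls_sym Hy) Hx)).
  - exact (cls_trans Hy (cls_trans (cls_sym Hy') Hx)).
Qed.

Lemma faceF_mem {a : bool} {n i C D} {p : cQ H (S n)} :
  faceF H phi a n i C D -> C p -> D (face a n i p).
Proof. intros [_ HD]; apply HD. Qed.

Lemma faceF_cls (a : bool) {n} i {C} {q : cQ H (S n)} :
  1 <= i <= S n -> (forall x, C x <-> cls H phi (S n) q x) ->
  faceF H phi a n i C (cls H phi n (face a n i q)).
Proof.
  intros Hi Hq; split; [apply isClass_cls|].
  intros p Hp; apply cls_face; [exact Hi | apply Hq, Hp].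
Qed.

Lemma faceF_exists (a : bool) {n i C} :
  1 <= i <= S n -> isClass H phi (S n) C -> exists D, faceF H phi a n i C D.
Proof. intros Hi [q Hq]; eexists; exact (faceF_cls a i Hi Hq). Qed.

Lemma faceF_unique {a : bool} {n i C D D'} :
  isClass H phi (S n) C -> faceF H phi a n i C D -> faceF H phi a n i C D' ->
  forall x, D x <-> D' x.
Proof.
  intros [q Hq] HD HD'.
  assert (HCq : C q) by apply Hq, cls_refl.
  exact (isClass_ext (proj1 HD) (proj1 HD')
           (faceF_mem HD HCq) (faceF_mem HD' HCq)).
Qed.

Lemma faceF_cubical (a b : bool) {n i j C D1 E1 D2 E2} :
  1 <= i -> i < j -> j <= S (S n) -> isClass H phi (S (S n)) C ->
  faceF H phi b (S n) j C D1 -> faceF H phi a n i D1 E1 ->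
  faceF H phi a (S n) i C D2 -> faceF H phi b n (j - 1) D2 E2 ->
  forall x, E1 x <-> E2 x.
Proof.
  intros Hi Hij Hj [q Hq] HD1 HE1 HD2 HE2.
  assert (HCq : C q) by apply Hq, cls_refl.
  apply (isClass_ext (proj1 HE1) (proj1 HE2)
           (faceF_mem HE1 (faceF_mem HD1 HCq))).
  rewrite (face_cubical a b Hi Hij Hj).
  exact (faceF_mem HE2 (faceF_mem HD2 HCq)).
Qed.

(* Which member is chosen is irrelevant, see [faceF_unique]. *)
Definition rep {n} (C : QF H phi n) : cQ H n :=
  proj1_sig (constructive_indefinite_description _ (proj2_sig C)).

Lemma rep_spec {n} (C : QF H phi n) :
  forall x, proj1_sig C x <-> cls H phi n (rep C) x.
Proof. exact (proj2_sig (constructive_indefinite_description _ (proj2_sig C))). Qed.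

Lemma QF_ext {n} {C D : QF H phi n} :
  (forall x, proj1_sig C x <-> proj1_sig D x) -> C = D.
Proof.
  intros HCD; apply eq_sig_hprop; [intros; apply proof_irrelevance|].
  apply functional_extensionality; intro x; apply propositional_extensionality, HCD.
Qed.

Definition faceQF (a : bool) n i (C : QF H phi (S n)) : QF H phi n :=
  exist _ (cls H phi n (face a n i (rep C))) (isClass_cls (face a n i (rep C))).

Lemma faceQF_spec (a : bool) {n} i (C : QF H phi (S n)) :
  1 <= i <= S n -> faceF H phi a n i (proj1_sig C) (proj1_sig (faceQF a n i C)).
Proof. intro Hi; exact (faceF_cls a i Hi (rep_spec C)). Qed.

Lemma faceQF_cubical :
  cubical_laws (QF H phi) (faceQF true) (faceQF false).
Proof.
  intros a b n i j C Hi Hij Hj.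
  assert (Hsel : forall c : bool,
             (if c then faceQF true else faceQF false) = faceQF c) by (intros []; reflexivity).
  rewrite !Hsel; apply QF_ext.
  eapply (faceF_cubical a b Hi Hij Hj (proj2_sig C)); apply faceQF_spec; lia.
Qed.

End Filtration.

Arguments faceQF {Sigma AP} H phi a n i C.

Theorem mainTheorem3 (Sigma AP : Type) (H : HDML Sigma AP) (phi : form AP) :
  (* (1) s^f_i, t^f_i are well-defined total maps Q_n^f -> Q_{n-1}^f *)
  (forall (a : bool) (n i : nat) (C : cQ H (S n) -> Prop),
     1 <= i <= S n -> isClass H phi (S n) C ->
     (exists D, faceF H phi a n i C D) /\
     (forall D D', faceF H phi a n i C D -> faceF H phi a n i C D' ->
        forall x, D x <-> D' x)) /\
  (* (2) cubical laws alpha^f_i o beta^f_j = beta^f_{j-1} o alpha^f_i *)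
  (forall (a b : bool) (n i j : nat) (C : cQ H (S (S n)) -> Prop)
          (D1 : cQ H (S n) -> Prop) (E1 : cQ H n -> Prop)
          (D2 : cQ H (S n) -> Prop) (E2 : cQ H n -> Prop),
     1 <= i -> i < j -> j <= S (S n) -> isClass H phi (S (S n)) C ->
     faceF H phi b (S n) j C D1 -> faceF H phi a n i D1 E1 ->
     faceF H phi a (S n) i C D2 -> faceF H phi b n (j - 1) D2 E2 ->
     forall x, E1 x <-> E2 x) /\
  (* consequently (U_n Q_n^f, s^f, t^f) is a cubical set *)
  (exists sF tF : forall n : nat, nat -> QF H phi (S n) -> QF H phi n,
     (forall n i (C : QF H phi (S n)), 1 <= i <= S n ->
        faceF H phi true n i (proj1_sig C) (proj1_sig (sF n i C)) /\
        faceF H phi false n i (proj1_sig C) (proj1_sig (tF n i C))) /\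
     cubical_laws (QF H phi) sF tF).
Proof.
  split; [|split].
  - intros a n i C Hi HC; split.
    + apply faceF_exists; assumption.
    + intros D D'; apply faceF_unique; exact HC.
  - intros a b; apply faceF_cubical.
  - exists (faceQF H phi true), (faceQF H phi false); split.
    + intros n i C Hi; split; apply faceQF_spec; exact Hi.
    + apply faceQF_cubical.
Qed.
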